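(* In a CDec-POMDP with a homogeneous policy $\pi$ (as described in the context), let $f_w$ have the form $f_w(\mathbf{s}_t,\mathbf{a}_t)=\sum_{i\in S,j\in A}n_t(i,j)\,f_w\big(i,j,o(i,\mathbf{n}_{\mathbf{s}_t})\big)$. Then the approximate policy gradient $\sum_{t=1}^H\mathbb{E}_{\mathbf{s}_t,\mathbf{a}_t}\big[f_w(\mathbf{s}_t,\mathbf{a}_t)\nabla_\theta\log P(\mathbf{a}_t\mid\mathbf{s}_t)\big]$ equals $$\mathbb{E}_{\mathbf{n}_{1:H}\sim P(\cdot;\pi)}\Big[\sum_{t=1}^H\sum_{i\in S,j\in A}n_t(i,j)\,\nabla_\theta\log\pi\big(j\mid i,o(i,\mathbf{n}_t)\big)\,f_w\big(i,j,o(i,\mathbf{n}_t)\big)\Big],$$ where the expectation is over count-table sequences $\mathbf{n}_{1:H}$ (taking values in the set $\Omega_{1:H}$ of consistent count tables).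
   Context: CDec-POMDP: $M$ agents, finite local state space $S$, finite action set $A$, horizon $H$; at time $t$ agent $m$ is in state $s^m_t$ and takes action $a^m_t$. Counts: $n_t(i)=|\{m:s^m_t=i\}|$, $n_t(i,j)=|\{m:(s^m_t,a^m_t)=(i,j)\}|$, $n_t(i,j,i')=|\{m:(s^m_t,a^m_t,s^m_{t+1})=(i,j,i')\}|$; $\mathbf{n}_t=\mathbf{n}_{\mathbf{s}_t}=(n_t(i))_{i\in S}$. Initial local states are i.i.d. from $b_o$; given $\mathbf{s}_t$, all agents independently act according to a common policy $\pi_t(j\mid i,o(i,\mathbf{n}_{\mathbf{s}_t}))$ (differentiable in parameter $\theta$, positive probabilities; $o$ a fixed observation function), so $P(\mathbf{a}_t\mid\mathbf{s}_t)=\prod_m\pi_t(a^m_t\mid s^m_t,o(s^m_t,\mathbf{n}_{\mathbf{s}_t}))$; each agent then independently transitions with probability $\phi_t(i'\mid i,j,\mathbf{n}_{\mathbf{s}_t})$. $P(\mathbf{n}_{1:H};\pi)$ denotes the distribution of the sequence of count tables $\mathbf{n}_{1:H}=\{(n_t(i)),(n_t(i,j)),(n_t(i,j,i'))\}_{t=1}^H$ induced by the joint trajectory of all agents under this process. $\Omega_{1:H}$ is the set of count tables with $\sum_i n_t(i)=M$, $\sum_j n_t(i,j)=n_t(i)$, $\sum_{i'}n_t(i,j,i')=n_t(i,j)$ for all $i,j,t$. The function $f_w(i,j,o)$ does not depend on $\theta$; $\mathbb{E}_{\mathbf{s}_t,\mathbf{a}_t}$ is over the marginal of $(\mathbf{s}_t,\mathbf{a}_t)$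 under the process. *)

From HB Require Import structures.
From mathcomp Require Import all_boot all_order all_algebra.
From mathcomp Require Import boolp classical_sets reals topology normedtype derive exp.
Set Implicit Arguments. Unset Strict Implicit. Unset Printing Implicit Defensive.
Import Order.TTheory GRing.Theory Num.Theory numFieldNormedType.Exports.
Local Open Scope ring_scope.

(* CDec-POMDP with M agents, local states S, actions A, observations O,
   horizon H; time t = 1..H is represented by t : 'I_H (0-based).
   A trajectory consists of joint states s_1..s_{H+1} and joint actions
   a_1..a_H. *)

Definition jstate (S : finType) (M : nat) := {ffun 'I_M -> S}.
Definition jaction (A : finType) (M : nat) := {ffun 'I_M -> A}.

Definition scount (S : finType) (M : nat) (s : jstate S M) : {ffun S -> nat} :=
  [ffun i => #|[set m | s m == i]|].

Definition sacount (S A : finType) (M : nat) (s : jstate S M) (a : jaction A M)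
  (i : S) (j : A) : nat := #|[set m | (s m, a m) == (i, j)]|.

Definition traj (S A : finType) (M H : nat) :=
  ({ffun 'I_H.+1 -> jstate S M} * {ffun 'I_H -> jaction A M})%type.

Definition cur (H : nat) (t : 'I_H) : 'I_H.+1 := widen_ord (leqnSn H) t.
Definition nxt (H : nat) (t : 'I_H) : 'I_H.+1 := lift ord0 t.

Definition traj_prob (R : realType) (S A O : finType) (M H d : nat)
  (b0 : S -> R) (o : S -> {ffun S -> nat} -> O)
  (pi : 'I_H -> 'rV[R]_d -> S -> O -> A -> R)
  (phi : 'I_H -> S -> A -> {ffun S -> nat} -> S -> R)
  (th : 'rV[R]_d) (tr : traj S A M H) : R :=
  (\prod_(m < M) b0 (tr.1 ord0 m)) *
  \prod_(t < H)
     ((\prod_(m < M) pi t th (tr.1 (cur t) m)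
                         (o (tr.1 (cur t) m) (scount (tr.1 (cur t)))) (tr.2 t m)) *
      (\prod_(m < M) phi t (tr.1 (cur t) m) (tr.2 t m)
                         (scount (tr.1 (cur t))) (tr.1 (nxt t) m))).

Definition marginal (R : realType) (S A O : finType) (M H d : nat)
  (b0 : S -> R) (o : S -> {ffun S -> nat} -> O)
  (pi : 'I_H -> 'rV[R]_d -> S -> O -> A -> R)
  (phi : 'I_H -> S -> A -> {ffun S -> nat} -> S -> R)
  (th : 'rV[R]_d) (t : 'I_H) (s : jstate S M) (a : jaction A M) : R :=
  \sum_(tr : traj S A M H | (tr.1 (cur t) == s) && (tr.2 t == a))
     traj_prob b0 o pi phi th tr.

(* Count tables at one time step: (n_t(i)), (n_t(i,j)), (n_t(i,j,i')),
   with entries in 0..M. *)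
Definition ctab (S A : finType) (M : nat) :=
  ({ffun S -> 'I_M.+1} * {ffun (S * A)%type -> 'I_M.+1}
   * {ffun (S * A * S)%type -> 'I_M.+1})%type.
Definition cseq (S A : finType) (M H : nat) := {ffun 'I_H -> ctab S A M}.

Definition counts (S A : finType) (M H : nat) (tr : traj S A M H) : cseq S A M H :=
  [ffun t =>
    ([ffun i => inord #|[set m | tr.1 (cur t) m == i]|],
     [ffun ij => inord #|[set m | (tr.1 (cur t) m, tr.2 t m) == ij]|],
     [ffun iji => inord #|[set m | (tr.1 (cur t) m, tr.2 t m, tr.1 (nxt t) m) == iji]|])].

Definition Omega (S A : finType) (M H : nat) : pred (cseq S A M H) :=
  fun N => [forall t : 'I_H,
    [&& (\sum_(i : S) ((N t).1.1 i : nat) == M)%N,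
        [forall i : S, (\sum_(j : A) ((N t).1.2 (i, j) : nat) == (N t).1.1 i)%N] &
        [forall i : S, forall j : A,
           (\sum_(i' : S) ((N t).2 (i, j, i') : nat) == (N t).1.2 (i, j))%N]]].

Definition count_prob (R : realType) (S A O : finType) (M H d : nat)
  (b0 : S -> R) (o : S -> {ffun S -> nat} -> O)
  (pi : 'I_H -> 'rV[R]_d -> S -> O -> A -> R)
  (phi : 'I_H -> S -> A -> {ffun S -> nat} -> S -> R)
  (th : 'rV[R]_d) (N : cseq S A M H) : R :=
  \sum_(tr : traj S A M H | counts tr == N) traj_prob b0 o pi phi th tr.

Definition ntab (S A : finType) (M : nat) (c : ctab S A M) : {ffun S -> nat} :=
  [ffun i => (c.1.1 i : nat)].

Definition grad (R : realType) (d : nat) (f : 'rV[R]_d -> R) (th : 'rV[R]_d)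
  : 'rV[R]_d := \row_(k < d) ('D_(delta_mx 0 k) f th).

(* Both sides are expectations over joint trajectories: the law of the count
   tables is the image of the trajectory law, and both integrands at time t
   are functions of (s_t, a_t).  Since agents act independently, the joint
   score grad log P(a_t | s_t) is the sum of the agents' scores, so the two
   integrands differ by cross terms f(agent m) * score(agent m') with m <> m'.
   Given s_t each cross term has mean zero, because a single agent's score
   has mean zero.  Conditioning on s_t amounts to summing out the later steps
   one at a time, each of which has total mass one; hence only the
   normalisation of pi and phi is used, never nonnegativity. *)

From HB Require Import structures.
From mathcomp Require Import all_boot all_order all_algebra ring.
From mathcomp Require Import boolp classical_sets functions reals topology.
From mathcomp Require Import normedtype derive exp.
Set Implicit Arguments. Unset Strict Implicit. Unset Printing Implicit Defensive.
Import Order.TTheory GRing.Theory Num.Theory numFieldNormedType.Exports.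
Local Open Scope ring_scope.

Section ScoreFunction.
Variables (R : realType) (V : normedModType R).
Implicit Types (P : V -> R) (x v : V).

Lemma is_derive_big_sum (I : Type) (r : seq I) (h : I -> V -> R) (dh : I -> R) x v :
  (forall i, is_derive x v (h i) (dh i)) ->
  is_derive x v (fun y => \sum_(i <- r) h i y) (\sum_(i <- r) dh i).
Proof.
move=> hd; elim: r => [|i r IH].
  rewrite big_nil (_ : (fun y => _) = cst 0); first exact: is_derive_cst.
  by apply: funext => y; rewrite big_nil.
rewrite big_cons (_ : (fun y => _) = h i + fun y => \sum_(j <- r) h j y).
  exact: is_deriveD.
by apply: funext => y; rewrite big_cons.
Qed.

Lemma derive_ln_comp P x v : differentiable P x -> 0 < P x ->
  is_derive x v (fun y => ln (P y)) ('D_v P x / P x).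
Proof.
move=> dP Px.
have dln : differentiable (@ln R) (P x).
  by apply/derivable1_diffP; apply: ex_derive; exact: is_derive1_ln.
have dlnP : differentiable (@ln R \o P) x by exact: differentiable_comp.
apply: DeriveDef; first exact: diff_derivable.
rewrite (deriveE _ dlnP) (diff_comp dP dln) /= (diff1E dln) derive1E.
by rewrite (derive_val (is_derive := is_derive1_ln Px)) -(deriveE _ dP).
Qed.

Lemma derive_ln_prod (I : Type) (r : seq I) (P : I -> V -> R) x v :
  (forall i, differentiable (P i) x) -> (forall i y, 0 < P i y) ->
  'D_v (fun y => ln (\prod_(i <- r) P i y)) x =
  \sum_(i <- r) 'D_v (fun y => ln (P i y)) x.
Proof.
move=> dP Ppos.
rewrite (_ : (fun y => _) = fun y => \sum_(i <- r) ln (P i y)); last first.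
  apply: funext => y; elim: r => [|i r IH]; first by rewrite !big_nil ln1.
  by rewrite !big_cons lnM ?IH ?posrE // prodr_gt0.
apply: derive_val; apply: is_derive_big_sum => i.
by apply: derivableP; apply: ex_derive; exact: derive_ln_comp.
Qed.

Lemma expected_score_eq0 (J : finType) (P : J -> V -> R) x v :
  (forall j, differentiable (P j) x) -> (forall j y, 0 < P j y) ->
  (forall y, \sum_j P j y = 1) ->
  \sum_j P j x * 'D_v (fun y => ln (P j y)) x = 0.
Proof.
move=> dP Ppos P1.
under eq_bigr => j _ do
  rewrite (derive_val (is_derive := derive_ln_comp v (dP j) (Ppos j x)))
    mulrCA mulfV ?gt_eqF // mulr1.
have dsum := @is_derive_big_sum _ (index_enum J) P (fun j => 'D_v (P j) x) x v
  (fun j => derivableP (diff_derivable (dP j))).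
rewrite -(derive_val (is_derive := dsum)) (_ : (fun y => _) = cst 1) ?derive_cst //.
by apply: funext => y; rewrite P1.
Qed.

End ScoreFunction.

Lemma sum_prod_sum_mul (R : comPzRingType) (I J : finType) (p f g : I -> J -> R) :
  (forall i, \sum_j p i j * g i j = 0) ->
  \sum_(a : {ffun I -> J}) (\prod_i p i (a i)) * ((\sum_i f i (a i)) * (\sum_i g i (a i)))
  = \sum_(a : {ffun I -> J}) (\prod_i p i (a i)) * \sum_i f i (a i) * g i (a i).
Proof.
move=> pg0; apply/eqP; rewrite -subr_eq0 -sumrB; apply/eqP.
have cross a : (\sum_i f i (a i)) * (\sum_i g i (a i)) - \sum_i f i (a i) * g i (a i)
    = \sum_i \sum_(i' | i' != i) f i (a i) * g i' (a i').
  rewrite mulr_suml -sumrB; apply: eq_bigr => i _.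
  by rewrite mulr_sumr (bigD1 i) //= addrC addrK.
under eq_bigr do rewrite -mulrBr cross mulr_sumr.
rewrite exchange_big /=; apply: big1 => i _.
under eq_bigr do rewrite mulr_sumr.
rewrite exchange_big /=; apply: big1 => i' i'i.
pose h l j := if l == i then f i j else if l == i' then g i' j else 1.
transitivity (\sum_(a : {ffun I -> J}) \prod_l (p l (a l) * h l (a l))).
  apply: eq_bigr => a _; rewrite big_split /=; congr (_ * _).
  rewrite (bigD1 i) //= (bigD1 i') //= big1 ?mulr1.
    by rewrite /h eqxx (negbTE i'i) eqxx.
  by move=> l /andP[li li']; rewrite /h (negbTE li) (negbTE li').
rewrite -(bigA_distr_bigA (fun l j => p l j * h l j)) /= (bigD1 i') //= mulrC.
suff -> : \sum_j p i' j * h i' j = 0 by rewrite mulr0.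
by rewrite -[RHS](pg0 i'); apply: eq_bigr => j _; rewrite /h (negbTE i'i) eqxx.
Qed.

Section LensFiber.
Variables (R : pzRingType) (X Y : finType) (get : X -> Y) (put : X -> Y -> X).
Hypotheses (get_put : forall x y, get (put x y) = y)
  (put_put : forall x y y', put (put x y) y' = put x y')
  (put_get : forall x, put x (get x) = x).

Lemma sum_lens_fiber (y0 : Y) (w : X -> R) (Q : X -> Y -> R) :
  (forall x y, w (put x y) = w x) -> (forall x y y', Q (put x y) y' = Q x y') ->
  \sum_x w x * Q x (get x) = \sum_x (w x * (get x == y0)%:R) * \sum_y Q x y.
Proof.
move=> w_put Q_put.
rewrite (partition_big get xpredT) //=.
transitivity (\sum_y \sum_(x | get x == y0) w x * Q x y).
  apply: eq_bigr => y _.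
  rewrite (reindex_onto (put^~ y) (put^~ y0)) /=; last first.
    by move=> x /eqP <-; rewrite put_put put_get.
  apply: eq_big => [x|x _]; last by rewrite get_put w_put Q_put.
  rewrite get_put eqxx put_put /=; apply/eqP/eqP => [<-|<-].
    by rewrite get_put.
  by rewrite put_get.
rewrite exchange_big /= [RHS](bigID (fun x => get x == y0)) /=.
rewrite [X in _ = _ + X]big1 ?addr0; last first.
  by move=> x /negbTE ->; rewrite mulr0 mul0r.
by apply: eq_bigr => x ->; rewrite mulr1 mulr_sumr.
Qed.

End LensFiber.

Definition fupd (I : finType) (T : Type) (f : {ffun I -> T}) (i : I) (y : T) :
  {ffun I -> T} := [ffun j => if j == i then y else f j].

Lemma fupdE (I : finType) (T : Type) (f : {ffun I -> T}) i y j :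
  fupd f i y j = if j == i then y else f j.
Proof. by rewrite ffunE. Qed.

Lemma sum_card_preim (T U : finType) (f : T -> U) :
  (\sum_u #|[set x | f x == u]| = #|T|)%N.
Proof.
rewrite -sum1_card (partition_big f xpredT) //=.
by apply: eq_bigr => u _; rewrite sum1dep_card; apply: eq_card => x; rewrite inE.
Qed.

Lemma sum_card_preim_pair (T X Y : finType) (f : T -> X) (g : T -> Y) x :
  (\sum_y #|[set m | (f m, g m) == (x, y)]| = #|[set m | f m == x]|)%N.
Proof.
rewrite -sum1dep_card (partition_big g xpredT) //=; apply: eq_bigr => y _.
by rewrite sum1dep_card; apply: eq_card => m; rewrite !inE xpair_eqE.
Qed.

Section Counts.
Variables (S A : finType) (M H : nat).

Lemma card_ord_set_ltS (P : pred 'I_M) : (#|[set m | P m]| < M.+1)%N.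
Proof. by rewrite ltnS (leq_trans (max_card _)) ?card_ord. Qed.

Lemma Omega_counts (tr : traj S A M H) : Omega (counts tr).
Proof.
apply/forallP => t; rewrite !ffunE /=; apply/and3P; split.
- under eq_bigr do rewrite ffunE inordK ?card_ord_set_ltS //.
  by rewrite sum_card_preim card_ord.
- apply/forallP => i; rewrite ffunE inordK ?card_ord_set_ltS //.
  under eq_bigr do rewrite ffunE inordK ?card_ord_set_ltS //.
  by rewrite sum_card_preim_pair.
- apply/forallP => i; apply/forallP => j; rewrite ffunE inordK ?card_ord_set_ltS //.
  under eq_bigr do rewrite ffunE inordK ?card_ord_set_ltS //.
  by rewrite (sum_card_preim_pair (fun m => (tr.1 (cur t) m, tr.2 t m))).
Qed.

Lemma ntab_counts (tr : traj S A M H) t : ntab (counts tr t) = scount (tr.1 (cur t)).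
Proof. by apply/ffunP => i; rewrite !ffunE inordK ?card_ord_set_ltS. Qed.

Lemma counts_sacount (tr : traj S A M H) t i j :
  ((counts tr t).1.2 (i, j) : nat) = sacount (tr.1 (cur t)) (tr.2 t) i j.
Proof. by rewrite !ffunE /= inordK ?card_ord_set_ltS. Qed.

Lemma sum_sacount (R : pzSemiRingType) (s : jstate S M) (a : jaction A M)
    (c : S -> A -> R) :
  \sum_i \sum_j (sacount s a i j)%:R * c i j = \sum_(m < M) c (s m) (a m).
Proof.
rewrite pair_bigA /= (partition_big (fun m => (s m, a m)) xpredT) //=.
apply: eq_bigr => -[i j] _; rewrite /sacount -sum1dep_card natr_sum mulr_suml.
by apply: eq_big => [m|m /eqP[-> ->]]; rewrite ?mul1r.
Qed.

End Counts.

Section Trajectories.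
Variables (R : realType) (S A O : finType) (M H d : nat)
  (b0 : S -> R) (o : S -> {ffun S -> nat} -> O)
  (pi : 'I_H -> 'rV[R]_d -> S -> O -> A -> R)
  (phi : 'I_H -> S -> A -> {ffun S -> nat} -> S -> R)
  (th : 'rV[R]_d).
Hypothesis pi_sum1 : forall t x i ob, \sum_(j : A) pi t x i ob j = 1.
Hypothesis phi_sum1 : forall t i j n, \sum_(i' : S) phi t i j n i' = 1.

Local Notation traj := (traj S A M H).
Local Notation jstate := (jstate S M).
Local Notation jaction := (jaction A M).

Definition policy_prob t (s : jstate) (a : jaction) :=
  \prod_(m < M) pi t th (s m) (o (s m) (scount s)) (a m).
Definition transition_prob t (s : jstate) (a : jaction) (s' : jstate) :=
  \prod_(m < M) phi t (s m) (a m) (scount s) (s' m).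
Definition init_prob (tr : traj) := \prod_(m < M) b0 (tr.1 ord0 m).
Definition step_prob t (tr : traj) :=
  policy_prob t (tr.1 (cur t)) (tr.2 t) *
  transition_prob t (tr.1 (cur t)) (tr.2 t) (tr.1 (nxt t)).

Lemma traj_probE tr :
  traj_prob b0 o pi phi th tr = init_prob tr * \prod_t step_prob t tr.
Proof. by []. Qed.

Lemma policy_prob_sum1 t s : \sum_a policy_prob t s a = 1.
Proof.
rewrite -(bigA_distr_bigA (fun m => pi t th (s m) (o (s m) (scount s)))) /=.
by apply: big1 => m _; rewrite pi_sum1.
Qed.

Lemma transition_prob_sum1 t s a : \sum_s' transition_prob t s a s' = 1.
Proof.
rewrite -(bigA_distr_bigA (fun m => phi t (s m) (a m) (scount s))) /=.
by apply: big1 => m _; rewrite phi_sum1.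
Qed.

(* Step [u] of a trajectory is the pair (a_u, s_{u+1}); [step_coord u] and
   [set_step u] form a lens onto it, so that it can be summed out. *)
Definition step_coord (u : 'I_H) (tr : traj) := (tr.2 u, tr.1 (nxt u)).
Definition set_step (u : 'I_H) (tr : traj) (y : jaction * jstate) : traj :=
  (fupd tr.1 (nxt u) y.2, fupd tr.2 u y.1).

Lemma step_coord_set u tr y : step_coord u (set_step u tr y) = y.
Proof. by case: y => a s; rewrite /step_coord /= !fupdE !eqxx. Qed.

Lemma set_step_set u tr y y' : set_step u (set_step u tr y) y' = set_step u tr y'.
Proof. by congr pair; apply/ffunP => j; rewrite !fupdE; case: eqP. Qed.

Lemma set_step_coord u tr : set_step u tr (step_coord u tr) = tr.
Proof.
case: tr => s a; congr pair; apply/ffunP => j;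
  by rewrite !fupdE; case: eqP => [->|].
Qed.

Lemma set_step_states (u : 'I_H) tr y (w : 'I_H.+1) :
  val w != u.+1 -> (set_step u tr y).1 w = tr.1 w.
Proof. by move=> wu; rewrite fupdE -val_eqE (negbTE wu). Qed.

Lemma set_step_actions (u : 'I_H) tr y (w : 'I_H) :
  w != u -> (set_step u tr y).2 w = tr.2 w.
Proof. by move=> wu; rewrite fupdE (negbTE wu). Qed.

Lemma init_prob_set_step u tr y : init_prob (set_step u tr y) = init_prob tr.
Proof. by rewrite /init_prob set_step_states. Qed.

Lemma step_prob_set_step (u v : 'I_H) tr y : v != u -> val v != u.+1 ->
  step_prob v (set_step u tr y) = step_prob v tr.
Proof.
move=> vu vSu.
by rewrite /step_prob !set_step_actions // !set_step_states //= eqSS -val_eqE.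
Qed.

Definition pinned y0 (u : 'I_H) (tr : traj) : R := (step_coord u tr == y0)%:R.

Lemma pinned_set_step y0 (u v : 'I_H) tr y : v != u ->
  pinned y0 v (set_step u tr y) = pinned y0 v tr.
Proof.
move=> vu; rewrite /pinned /step_coord set_step_actions //.
by rewrite set_step_states //= eqSS -val_eqE.
Qed.

Lemma sum_step_marginal y0 u (W : traj -> R) (q : traj -> jaction -> R) :
  (forall tr y, W (set_step u tr y) = W tr) ->
  (forall tr y a, q (set_step u tr y) a = q tr a) ->
  \sum_tr W tr * step_prob u tr * q tr (tr.2 u) =
  \sum_tr W tr * pinned y0 u tr * \sum_a policy_prob u (tr.1 (cur u)) a * q tr a.
Proof.
move=> W_inv q_inv.
have cur_inv tr y : (set_step u tr y).1 (cur u) = tr.1 (cur u).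
  by rewrite set_step_states //= ltn_eqF.
pose Q (tr : traj) (y : jaction * jstate) := policy_prob u (tr.1 (cur u)) y.1 *
  transition_prob u (tr.1 (cur u)) y.1 y.2 * q tr y.1.
transitivity (\sum_tr W tr * Q tr (step_coord u tr)).
  by apply: eq_bigr => tr _; rewrite -mulrA.
rewrite (sum_lens_fiber (@step_coord_set u) (@set_step_set u) (@set_step_coord u) y0
  W_inv); last by move=> tr y y'; rewrite /Q cur_inv q_inv.
apply: eq_bigr => tr _; congr (_ * _).
rewrite -(pair_bigA _ (fun a s => Q tr (a, s))) /=.
apply: eq_bigr => a _; rewrite /Q /=.
under eq_bigr do rewrite mulrAC.
by rewrite -mulr_sumr transition_prob_sum1 mulr1.
Qed.

Definition prefix_prob k (tr : traj) := \prod_(v < H | (v < k)%N) step_prob v tr.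
Definition pinned_from y0 k (tr : traj) := \prod_(v < H | (k <= v)%N) pinned y0 v tr.

Lemma prefix_probS k (kH : (k < H)%N) tr :
  prefix_prob k.+1 tr = step_prob (Ordinal kH) tr * prefix_prob k tr.
Proof.
rewrite /prefix_prob (bigD1 (Ordinal kH)) //=; congr (_ * _).
by apply: eq_bigl => v; rewrite -val_eqE /= ltnS ltn_neqAle andbC.
Qed.

Lemma pinned_fromS y0 k (kH : (k < H)%N) tr :
  pinned_from y0 k tr = pinned y0 (Ordinal kH) tr * pinned_from y0 k.+1 tr.
Proof.
rewrite /pinned_from (bigD1 (Ordinal kH)) //=; congr (_ * _).
by apply: eq_bigl => v; rewrite -val_eqE /= ltn_neqAle eq_sym andbC.
Qed.

Lemma prefix_prob_set_step k (u : 'I_H) tr y : (k <= u)%N ->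
  prefix_prob k (set_step u tr y) = prefix_prob k tr.
Proof.
move=> ku; apply: eq_bigr => v vk; apply: step_prob_set_step.
  by rewrite -val_eqE /= ltn_eqF // (leq_trans vk).
by rewrite ltn_eqF // ltnS ltnW // (leq_trans vk).
Qed.

Lemma pinned_from_set_step y0 k (u : 'I_H) tr y : (u < k)%N ->
  pinned_from y0 k (set_step u tr y) = pinned_from y0 k tr.
Proof.
move=> uk; apply: eq_bigr => v kv; apply: pinned_set_step.
by rewrite -val_eqE /= gtn_eqF // (leq_trans uk).
Qed.

(* Summing out the steps [k..H-1] from the last one backwards: each removed
   step contributes total mass one, and its coordinates are pinned to [y0]. *)
Lemma sum_traj_prob_prefix y0 k (g : traj -> R) : (k <= H)%N ->
  (forall (u : 'I_H) tr y, (k <= u)%N -> g (set_step u tr y) = g tr) ->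
  \sum_tr traj_prob b0 o pi phi th tr * g tr =
  \sum_tr init_prob tr * prefix_prob k tr * pinned_from y0 k tr * g tr.
Proof.
move=> kH; rewrite -(subKn kH); elim: (H - k)%N (leq_subr k H) => [|n IH] nH g_inv.
  apply: eq_bigr => tr _; rewrite traj_probE subn0 [pinned_from _ _ _]big1 ?mulr1.
    by congr (_ * _ * _); apply: eq_bigl => v; rewrite ltn_ord.
  by move=> v; rewrite leqNgt ltn_ord.
have kH' : (H - n.+1 < H)%N by rewrite -subn_gt0 subKn // ltnW.
have E : (H - n = (H - n.+1).+1)%N by rewrite subnSK.
rewrite IH ?E; last 2 first.
- exact: ltnW.
- by move=> u tr y /ltnW; apply: g_inv.
set k' := (H - n.+1)%N.
pose W tr := init_prob tr * prefix_prob k' tr * pinned_from y0 k'.+1 tr * g tr.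
transitivity (\sum_tr W tr * step_prob (Ordinal kH') tr * 1).
  by apply: eq_bigr => tr _; rewrite /W prefix_probS; ring.
etransitivity.
  apply: (sum_step_marginal y0 (q := fun _ _ => 1)) => // tr y.
  by rewrite /W init_prob_set_step prefix_prob_set_step ?pinned_from_set_step ?g_inv.
apply: eq_bigr => tr _; rewrite (pinned_fromS y0 kH') /W.
under eq_bigr do rewrite mulr1.
by rewrite policy_prob_sum1; ring.
Qed.

Lemma expect_policy_centered_eq0 (t : 'I_H) (h : jstate -> jaction -> R) :
  (forall s, \sum_a policy_prob t s a * h s a = 0) ->
  \sum_tr traj_prob b0 o pi phi th tr * h (tr.1 (cur t)) (tr.2 t) = 0.
Proof.
move=> h_centered.
have [tr0 _ | traj0] := pickP (@predT traj); last first.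
  by apply: big1 => tr _; have := traj0 tr.
pose y0 := step_coord t tr0.
rewrite (sum_traj_prob_prefix y0 (k := t.+1)) //; last first.
  move=> u tr y tu; rewrite set_step_states ?set_step_actions //=.
    by rewrite -val_eqE /= ltn_eqF.
  by rewrite ltn_eqF // ltnW.
pose W tr := init_prob tr * prefix_prob t tr * pinned_from y0 t.+1 tr.
transitivity (\sum_tr W tr * step_prob t tr * h (tr.1 (cur t)) (tr.2 t)).
  apply: eq_bigr => tr _; rewrite (prefix_probS (ltn_ord t)) /W.
  by rewrite (_ : Ordinal _ = t) //; [ring | exact: val_inj].
etransitivity.
  apply: (sum_step_marginal y0 (q := fun tr => h (tr.1 (cur t)))) => tr y.
    by rewrite /W init_prob_set_step prefix_prob_set_step ?pinned_from_set_step.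
  by move=> a; rewrite set_step_states //= ltn_eqF.
by apply: big1 => tr _; rewrite h_centered mulr0.
Qed.

Lemma sum_marginal t (Z : jstate -> jaction -> R) :
  \sum_s \sum_a marginal b0 o pi phi th t s a * Z s a =
  \sum_tr traj_prob b0 o pi phi th tr * Z (tr.1 (cur t)) (tr.2 t).
Proof.
rewrite pair_bigA /=.
rewrite [RHS](partition_big (fun tr : traj => (tr.1 (cur t), tr.2 t)) xpredT) //=.
apply: eq_bigr => -[s a] _; rewrite /marginal mulr_suml.
by apply: eq_big => [tr|tr /andP[/eqP-> /eqP->]]; rewrite // xpair_eqE.
Qed.

Lemma sum_count_prob (G : cseq S A M H -> R) :
  \sum_(N | Omega N) count_prob b0 o pi phi th N * G N =
  \sum_tr traj_prob b0 o pi phi th tr * G (counts tr).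
Proof.
rewrite [RHS](partition_big (@counts S A M H) (@Omega S A M H)) //=.
  apply: eq_bigr => N _; rewrite /count_prob mulr_suml.
  by apply: eq_big => [tr|tr /eqP ->].
by move=> tr _; exact: Omega_counts.
Qed.

Hypothesis pi_pos : forall t x i ob j, 0 < pi t x i ob j.
Hypothesis pi_diff : forall t i ob j x, differentiable (fun y => pi t y i ob j) x.

Lemma sum_policy_prob_joint_score t s (f : S -> A -> R) v :
  \sum_a policy_prob t s a * ((\sum_(m < M) f (s m) (a m)) *
    'D_v (fun x => ln (\prod_(m < M) pi t x (s m) (o (s m) (scount s)) (a m))) th) =
  \sum_a policy_prob t s a * \sum_(m < M) f (s m) (a m) *
    'D_v (fun x => ln (pi t x (s m) (o (s m) (scount s)) (a m))) th.
Proof.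
under eq_bigr do rewrite derive_ln_prod //.
pose score m j := 'D_v (fun x => ln (pi t x (s m) (o (s m) (scount s)) j)) th.
apply: (@sum_prod_sum_mul _ _ _ (fun m => pi t th (s m) (o (s m) (scount s)))
  (fun m => f (s m)) score) => m.
exact: expected_score_eq0.
Qed.

Variables (fw : S -> A -> O -> R) (F : jstate -> jaction -> R).
Hypothesis F_def : forall s a,
  F s a = \sum_i \sum_j (sacount s a i j)%:R * fw i j (o i (scount s)).

Lemma directional_count_policy_gradient v :
  \sum_t \sum_s \sum_a marginal b0 o pi phi th t s a *
    (F s a * 'D_v (fun x =>
       ln (\prod_(m < M) pi t x (s m) (o (s m) (scount s)) (a m))) th)
  = \sum_(N : cseq S A M H | Omega N) count_prob b0 o pi phi th N *
    \sum_t \sum_i \sum_j ((N t).1.2 (i, j))%:R * fw i j (o i (ntab (N t))) *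
      'D_v (fun x => ln (pi t x i (o i (ntab (N t))) j)) th.
Proof.
rewrite sum_count_prob.
under [RHS]eq_bigr do rewrite mulr_sumr.
rewrite [RHS]exchange_big /=; apply: eq_bigr => t _.
pose G (s : jstate) (a : jaction) := \sum_(m < M) fw (s m) (a m) (o (s m) (scount s)) *
  'D_v (fun x => ln (pi t x (s m) (o (s m) (scount s)) (a m))) th.
have counts_G tr : \sum_i \sum_j ((counts tr t).1.2 (i, j))%:R *
    fw i j (o i (ntab (counts tr t))) *
    'D_v (fun x => ln (pi t x i (o i (ntab (counts tr t))) j)) th
  = G (tr.1 (cur t)) (tr.2 t).
  under eq_bigr do under eq_bigr do rewrite counts_sacount ntab_counts -mulrA.
  by rewrite sum_sacount.
under [RHS]eq_bigr do rewrite counts_G.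
rewrite sum_marginal; apply/eqP; rewrite -subr_eq0 -sumrB; apply/eqP.
under eq_bigr do rewrite -mulrBr.
pose Dln (s : jstate) (a : jaction) :=
  'D_v (fun x => ln (\prod_(m < M) pi t x (s m) (o (s m) (scount s)) (a m))) th.
apply: (expect_policy_centered_eq0 (h := fun s a => F s a * Dln s a - G s a)) => s.
under eq_bigr do rewrite mulrBr F_def sum_sacount.
pose f i j := fw i j (o i (scount s)).
by rewrite sumrB (sum_policy_prob_joint_score _ _ f) subrr.
Qed.

End Trajectories.

Theorem theorem3 (R : realType) (S A O : finType) (M H d : nat)
  (b0 : S -> R) (o : S -> {ffun S -> nat} -> O)
  (pi : 'I_H -> 'rV[R]_d -> S -> O -> A -> R)
  (phi : 'I_H -> S -> A -> {ffun S -> nat} -> S -> R)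
  (fw : S -> A -> O -> R) (F : jstate S M -> jaction A M -> R)
  (th : 'rV[R]_d) :
  (forall i, 0 <= b0 i) -> \sum_(i : S) b0 i = 1 ->
  (forall t x i ob j, 0 < pi t x i ob j) ->
  (forall t x i ob, \sum_(j : A) pi t x i ob j = 1) ->
  (forall t i ob j x, differentiable (fun y => pi t y i ob j) x) ->
  (forall t i j n i', 0 <= phi t i j n i') ->
  (forall t i j n, \sum_(i' : S) phi t i j n i' = 1) ->
  (forall s a, F s a = \sum_(i : S) \sum_(j : A)
                         (sacount s a i j)%:R * fw i j (o i (scount s))) ->
  \sum_(t < H) \sum_(s : jstate S M) \sum_(a : jaction A M)
     marginal b0 o pi phi th t s a *:
       (F s a *: grad (fun x => ln (\prod_(m < M) pi t x (s m) (o (s m) (scount s)) (a m))) th)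
  =
  \sum_(N : cseq S A M H | Omega N)
     count_prob b0 o pi phi th N *:
       (\sum_(t < H) \sum_(i : S) \sum_(j : A)
          (((N t).1.2 (i, j) : nat)%:R
           * fw i j (o i (ntab (N t)))) *:
            grad (fun x => ln (pi t x i (o i (ntab (N t))) j)) th).
Proof.
move=> _ _ pi_pos pi_sum1 pi_diff _ phi_sum1 F_def.
apply/rowP => k; rewrite !summxE.
under eq_bigr do rewrite summxE.
under eq_bigr do under eq_bigr do rewrite summxE.
under eq_bigr do under eq_bigr do under eq_bigr do rewrite !mxE.
under [RHS]eq_bigr do rewrite mxE summxE.
under [RHS]eq_bigr do under eq_bigr do rewrite summxE.
under [RHS]eq_bigr do under eq_bigr do under eq_bigr do rewrite summxE.
under [RHS]eq_bigr do under eq_bigr do under eq_bigr do under eq_bigr do rewrite !mxE.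
exact: directional_count_policy_gradient.
Qed.
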